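(* For every integer $k \geq 3$ there exists an instance $H=(V,E,C,\ell)$ of \textsc{MinECC} with $k$ colors, all edge weights equal to $1$, and rank $r = k-1$ (so $k = r+1$), such that the optimal \textsc{MinECC} value (minimum number of mistakes over all node colorings) is $k-1 = r$, while the optimal value of the \textsc{MinECC} LP relaxation on $H$ is $\frac{k}{2} = \frac{r+1}{2}$. Consequently the integrality gap of the \textsc{MinECC} LP relaxation is at least $2\left(1-\frac1k\right) = 2\left(1-\frac{1}{r+1}\right)$.
   Context: An edge-colored hypergraph is $H=(V,E,C,\ell)$ with finite node set $V$, a multiset $E$ of nonempty subsets of $V$ (edges), a color set $C=[k]=\{1,\dots,k\}$, a map $\ell\colon E\to C$, and weights $w_e\ge 0$ for $e\in E$. The rank $r$ is $\max_{e\in E}|e|$. A node coloring is a map $Y\colon V\to C$; it makes a mistake at $e$ (written $e\in\mathcal M_Y$) if some $v\in e$ has $Y[v]\neq \ell(e)$. The \textsc{MinECC} problem is to minimize $\sum_{e\in E} w_e \mathbb 1[e\in\mathcal M_Y]$ over all $Y$. The \textsc{MinECC} LP relaxation has variables $x_v^i$ ($v\in V$, $i\in C$) and $x_e$ ($e\in E$) and is: minimize $\sum_{e\in E} w_e x_e$ subject to $\sum_{i=1}^k x_v^i = k-1$ for all $v\in V$; $x_e \ge x_v^{\ell(e)}$ for all $e\in E$ and $v\in e$; $0\le x_v^i\le 1$; $0\le x_e\le 1$. *)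

From mathcomp Require Import all_boot all_order all_algebra.
Set Implicit Arguments. Unset Strict Implicit. Unset Printing Implicit Defensive.
Import Order.TTheory GRing.Theory Num.Theory.
Local Open Scope ring_scope.

(* An edge-colored hypergraph with k colors: node set V (finite type), edges
   indexed by a finite type E (so E is a multiset of node subsets),
   edge e : {set V}, color map lab : E -> 'I_k (colors [k] = {0,...,k-1}),
   weights w : E -> R. *)

Section MinECC.
Variables (R : realFieldType) (V E : finType) (k : nat).
Variables (edge : E -> {set V}) (lab : E -> 'I_k) (w : E -> R).

Definition ecc_wf : Prop := (forall e, edge e != set0) /\ (forall e, 0 <= w e).

Definition ecc_rank : nat := (\max_(e : E) #|edge e|)%N.

Definition mistake (Y : V -> 'I_k) (e : E) : bool :=
  [exists v in edge e, Y v != lab e].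

Definition ecc_cost (Y : V -> 'I_k) : R := \sum_(e | mistake Y e) w e.

Definition ecc_opt (m : R) : Prop :=
  (exists Y : V -> 'I_k, ecc_cost Y = m) /\ (forall Y : V -> 'I_k, m <= ecc_cost Y).

Definition lp_feasible (xv : V -> 'I_k -> R) (xe : E -> R) : Prop :=
  [/\ forall v, \sum_(i < k) xv v i = (k.-1)%:R,
      forall e v, v \in edge e -> xv v (lab e) <= xe e,
      forall v i, 0 <= xv v i /\ xv v i <= 1
    & forall e, 0 <= xe e /\ xe e <= 1].

Definition lp_obj (xe : E -> R) : R := \sum_(e : E) w e * xe e.

Definition lp_opt (m : R) : Prop :=
  (exists xv xe, lp_feasible xv xe /\ lp_obj xe = m) /\
  (forall xv xe, lp_feasible xv xe -> m <= lp_obj xe).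

End MinECC.

From mathcomp Require Import all_boot all_order all_algebra.
From mathcomp Require Import ring lra zify.
Set Implicit Arguments. Unset Strict Implicit. Unset Printing Implicit Defensive.
Import Order.TTheory GRing.Theory Num.Theory.
Local Open Scope ring_scope.

Lemma ordS_neq n (i : 'I_n.+2) : ordS i != i.
Proof.
by rewrite -[ordS i](add_Zp_1 (i : 'Z_n.+2)) -subr_eq0 addrAC subrr add0r oner_eq0.
Qed.

Lemma sum_ordS (R : nmodType) n (F : 'I_n -> R) :
  \sum_(i < n) F (ordS i) = \sum_(i < n) F i.
Proof. by rewrite [RHS](reindex_inj (@ordS_inj n)). Qed.

Lemma pairwise_ge1_sum_ge_half (R : realFieldType) n (x : 'I_n.+2 -> R) :
  (forall i j, i != j -> 1 <= x i + x j) -> n.+2%:R / 2 <= \sum_i x i.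
Proof.
move=> x_pair.
have : \sum_(i < n.+2) (1 : R) <= \sum_i (x i + x (ordS i)).
  by apply: ler_sum => i _; rewrite x_pair // eq_sym ordS_neq.
rewrite big_split /= sum_ordS sumr_const card_ord; lra.
Qed.

(* The slacks [1 - x i] are nonnegative and sum to 1. *)
Lemma sum_pred_pair_ge1 (R : realFieldType) n (x : 'I_n -> R) (a b : 'I_n) :
  \sum_i x i = n.-1%:R -> (forall i, x i <= 1) -> a != b -> 1 <= x a + x b.
Proof.
move=> sum_x x_le1 ab.
have slack_sum : \sum_i (1 - x i) = 1.
  have n_gt0 : (0 < n)%N := leq_ltn_trans (leq0n a) (ltn_ord a).
  by rewrite sumrB sumr_const card_ord sum_x -{1}(prednK n_gt0) -add1n natrD addrK.
have rest_ge0 : 0 <= \sum_(i | (i != a) && (i != b)) (1 - x i).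
  by apply: sumr_ge0 => i _; rewrite subr_ge0.
move: slack_sum; rewrite (bigD1 a) //= (bigD1 b) 1?eq_sym //=; lra.
Qed.

Lemma natr_pred_div_half (R : numFieldType) k : (0 < k)%N ->
  k.-1%:R / (k%:R / 2) = 2 * (1 - k%:R^-1) :> R.
Proof.
case: k => [|k] // _; rewrite -natr1 /=.
by field; rewrite gt_eqF // ltr_wpDl.
Qed.

Lemma ecc_cost_unit (R : realFieldType) (V E : finType) k (edge : E -> {set V})
    (lab : E -> 'I_k) (Y : V -> 'I_k) :
  ecc_cost edge lab (fun _ => 1 : R) Y = #|[set e | mistake edge lab Y e]|%:R.
Proof. by rewrite /ecc_cost -sum1_card natr_sum; apply: eq_bigl => e; rewrite inE. Qed.

Section ColorPairs.
Variable n : nat.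
Local Notation k := n.+2.

Definition color_pair := {A : {set 'I_k} | #|A| == 2%N}.

Lemma card_pair (i j : 'I_k) : i != j -> #|[set i; j]| == 2%N.
Proof. by rewrite cards2 => ->. Qed.

(* [pair i i] is a junk value. *)
Definition pair (i j : 'I_k) : color_pair :=
  let default := exist (fun A : {set 'I_k} => #|A| == 2%N) _ (@card_pair ord0 ord_max isT) in
  insubd (default : color_pair) [set i; j].

Lemma val_pair i j : i != j -> val (pair i j) = [set i; j].
Proof. by move=> ij; rewrite insubdK //; apply: card_pair. Qed.

Definition star (i : 'I_k) : {set color_pair} := [set p : color_pair | i \in val p].

Lemma pair_in_star_l i j : i != j -> pair i j \in star i.
Proof. by move=> ij; rewrite inE val_pair // !inE eqxx. Qed.

Lemma pair_in_star_r i j : i != j -> pair i j \in star j.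
Proof. by move=> ij; rewrite inE val_pair // !inE eqxx orbT. Qed.

Lemma star_pairP i (p : color_pair) :
  reflect (exists2 j, j != i & p = pair i j) (p \in star i).
Proof.
apply: (iffP idP) => [|[j ji ->]]; last by rewrite pair_in_star_l // eq_sym.
have /cards2P [x [y [xy def_p]]] := valP p.
rewrite inE def_p !inE => /orP[] /eqP ->.
  by exists y; rewrite 1?eq_sym //; apply: val_inj; rewrite val_pair.
by exists x => //; apply: val_inj; rewrite val_pair 1?eq_sym // def_p setUC.
Qed.

Lemma card_star i : #|star i| = k.-1.
Proof.
have -> : star i = pair i @: [set~ i].
  apply/setP => p; apply/star_pairP/imsetP => [] [j].
    by exists j; rewrite // !inE.
  by rewrite !inE => ji ->; exists j.
rewrite card_in_imset ?cardsC1 ?card_ord // => a b.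
rewrite !inE => ai bi /(congr1 val); rewrite !val_pair 1?eq_sym //.
by move=> /setP /(_ a); rewrite !inE eqxx (negbTE ai) eq_sym => /esym /eqP.
Qed.

Lemma mistake_freeP (Y : color_pair -> 'I_k) i :
  reflect {in star i, forall p, Y p = i} (~~ mistake star id Y i).
Proof.
by apply: (iffP exists_inPn) => Y_i p /Y_i; [move/negPn/eqP | move->; rewrite eqxx].
Qed.

Lemma card_mistake_free_le1 (Y : color_pair -> 'I_k) :
  (#|[set i | ~~ mistake star id Y i]| <= 1)%N.
Proof.
apply/card_le1_eqP => i j; rewrite !inE => /mistake_freeP Y_i /mistake_freeP Y_j.
apply/eqP; apply: contraT => ij.
have := Y_i _ (pair_in_star_r ij).
by rewrite (Y_j _ (pair_in_star_l ij)) => ji; rewrite ji eqxx in ij.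
Qed.

Lemma card_mistake_ge_pred (Y : color_pair -> 'I_k) :
  (k.-1 <= #|[set i | mistake star id Y i]|)%N.
Proof.
have -> : [set i | mistake star id Y i] = ~: [set i | ~~ mistake star id Y i].
  by apply/setP => i; rewrite !inE negbK.
have := cardsC [set i | ~~ mistake star id Y i]; have := card_mistake_free_le1 Y.
rewrite card_ord; lia.
Qed.

Lemma mistake_star_const c : [set i | mistake star id (fun=> c) i] = [set~ c].
Proof.
apply/setP => i; rewrite !inE; apply/idP/idP => [/exists_inP [p _]|ci].
  by rewrite eq_sym.
by apply/exists_inP; exists (pair i c); [exact: pair_in_star_l | rewrite eq_sym].
Qed.

Section LP.
Variable R : realFieldType.

Lemma lp_feasible_pair_ge1 xv (xe : 'I_k -> R) i j :
  lp_feasible star id xv xe -> i != j -> 1 <= xe i + xe j.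
Proof.
case=> sum_xv xv_le_xe xv_bound _ ij.
have := sum_pred_pair_ge1 (sum_xv (pair i j)) (fun l => (xv_bound _ l).2) ij.
have := xv_le_xe _ _ (pair_in_star_l ij); have := xv_le_xe _ _ (pair_in_star_r ij).
lra.
Qed.

Definition half_xv (p : color_pair) (i : 'I_k) : R :=
  if i \in val p then 2^-1 else 1.

Lemma sum_half_xv (p : color_pair) : \sum_(i < k) half_xv p i = k.-1%:R.
Proof.
rewrite /half_xv (bigID (mem (val p))) /=.
rewrite (eq_bigr (fun=> 2^-1)) => [|i ->] //.
rewrite [X in _ + X](eq_bigr (fun=> 1)) => [|i /negbTE -> //].
have card_p : #|val p| = 2%N := eqP (valP p).
have card_rest : #|[pred i | i \notin val p]| = n.
  by apply/eqP; rewrite -(eqn_add2l 2) -{1}card_p cardC card_ord.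
by rewrite !sumr_const card_p card_rest mulr2n -add1n natrD; field.
Qed.

Lemma half_feasible : lp_feasible star id half_xv (fun=> 2^-1).
Proof.
split=> [p|i p|p i|i]; first exact: sum_half_xv.
- by rewrite inE /half_xv => ->.
- by rewrite /half_xv; case: ifP => _; split; lra.
- by split; lra.
Qed.

Lemma ecc_opt_star : ecc_opt star id (fun=> 1 : R) k.-1%:R.
Proof.
split=> [|Y]; last by rewrite ecc_cost_unit ler_nat card_mistake_ge_pred.
by exists (fun=> ord0); rewrite ecc_cost_unit mistake_star_const cardsC1 card_ord.
Qed.

Lemma lp_opt_star : lp_opt star id (fun=> 1 : R) (k%:R / 2).
Proof.
split=> [|xv xe feas].
  exists half_xv, (fun=> 2^-1).
  split; first exact: half_feasible.
  rewrite /lp_obj (eq_bigr (fun=> 2^-1)) => [|i _]; last exact: mul1r.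
  by rewrite sumr_const card_ord mulr_natl.
rewrite /lp_obj (eq_bigr xe) => [|i _]; last exact: mul1r.
by apply: pairwise_ge1_sum_ge_half => i j; apply: lp_feasible_pair_ge1 feas.
Qed.
End LP.

Lemma rank_star : ecc_rank star = k.-1.
Proof.
have k_gt0 : (0 < #|'I_k|)%N by rewrite card_ord.
rewrite /ecc_rank.
by have [i ->] := bigop.eq_bigmax (fun i => #|star i|) k_gt0; rewrite card_star.
Qed.
End ColorPairs.

Theorem lemma1 : forall k : nat, (3 <= k)%N ->
  exists (V E : finType) (edge : E -> {set V}) (lab : E -> 'I_k),
    ecc_rank edge = k.-1 /\
    forall R : realFieldType,
      let w := fun _ : E => (1 : R) in
      [/\ ecc_wf edge w,
          ecc_opt edge lab w (k.-1)%:R,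
          lp_opt edge lab w (k%:R / 2)
        & (k.-1)%:R / (k%:R / 2) = 2 * (1 - k%:R^-1) :> R].
Proof.
case=> [|[|[|n]]] // _.
exists (color_pair n.+1), 'I_n.+3, (@star n.+1), id.
split=> [|R w]; first exact: rank_star.
split; [split=> e | exact: ecc_opt_star | exact: lp_opt_star |].
- by rewrite -card_gt0 card_star.
- exact: ler01.
exact: natr_pred_div_half.
Qed.
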